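(* Let $E$ be a set of finite measure and let $(F_n)\subset L^{3/2}(E,\mathbb{R}^3)$ be bounded. Assume that for some $F\in L^{3/2}(E,\mathbb{R}^3)$ and some $\theta>0$ one has $$\left(\left(|F_n|^{-1/2}F_n-|F|^{-1/2}F\right)\cdot(F_n-F)\right)^\theta\to0\quad\text{in }L^1(E).$$ Then $F_n\to F$ in $L^p(E,\mathbb{R}^3)$ for any $1\le p<3/2$.
   Context: $|v|^{-1/2}v$ is interpreted as $0$ where $v=0$. *)

From HB Require Import structures.
From mathcomp Require Import all_boot all_order all_algebra.
From mathcomp Require Import all_classical all_reals all_analysis.
Set Implicit Arguments. Unset Strict Implicit. Unset Printing Implicit Defensive.
Import Order.TTheory GRing.Theory Num.Theory.
Local Open Scope ring_scope.

Definition dot3 {R : realType} (u v : 'rV[R]_3) : R := \sum_(i < 3) u ord0 i * v ord0 i.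
Definition enorm3 {R : realType} (v : 'rV[R]_3) : R := Num.sqrt (dot3 v v).

Definition jmap {R : realType} (v : 'rV[R]_3) : 'rV[R]_3 :=
  if v == 0 then 0 else (powR (enorm3 v) (- (2^-1))) *: v.

Definition meas3 {d : measure_display} {T : measurableType d} {R : realType}
  (E : set T) (F : T -> 'rV[R]_3) : Prop :=
  forall i : 'I_3, measurable_fun E (fun x => F x ord0 i).

Definition intp {d : measure_display} {T : measurableType d} {R : realType}
  (mu : {measure set T -> \bar R}) (E : set T) (p : R) (F : T -> 'rV[R]_3) : \bar R :=
  (\int[mu]_(x in E) (powR (enorm3 (F x)) p)%:E)%E.

Definition inLp3 {d : measure_display} {T : measurableType d} {R : realType}
  (mu : {measure set T -> \bar R}) (E : set T) (p : R) (F : T -> 'rV[R]_3) : Prop :=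
  meas3 E F /\ (intp mu E p F < +oo)%E.

From HB Require Import structures.
From mathcomp Require Import all_boot all_order all_algebra.
From mathcomp Require Import all_classical all_reals all_analysis.
From mathcomp Require Import ring lra measurable_realfun.
Set Implicit Arguments.
Unset Strict Implicit.
Unset Printing Implicit Defensive.

Import Order.TTheory GRing.Theory Num.Theory.
Import numFieldNormedType.Exports.
Local Open Scope classical_set_scope.
Local Open Scope ring_scope.

(* With j v = |v|^(-1/2) v, Cauchy-Schwarz gives the pointwise estimate
     |a - b|^2 <= ((j a - j b) . (a - b)) (|a|^(1/2) + |b|^(1/2)).
   Hence, for p < q = 3/2 and every eps > 0, there is C with
     |a - b|^p <= eps (1 + |a|^q + |b|^q) + C ((j a - j b) . (a - b))^theta:
   either |a - b| is small, or max(|a|, |b|) is so large that the q-th powers dominate,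
   or both are bounded and the estimate bounds the monotonicity gap from below.
   Integrating over E, \int |F_n - F|^p is at most eps times a bound uniform in n,
   plus C times a quantity tending to 0. *)

Section EuclideanSpace.
Variable R : realType.
Implicit Types (u v w : 'rV[R]_3) (a : R).

Lemma dot3C u v : dot3 u v = dot3 v u.
Proof. by apply: eq_bigr => i _; rewrite mulrC. Qed.

Lemma dot3Bl u v w : dot3 (u - v) w = dot3 u w - dot3 v w.
Proof. by rewrite /dot3 -sumrB; apply: eq_bigr => i _; rewrite !mxE mulrBl. Qed.

Lemma dot3Br u v w : dot3 u (v - w) = dot3 u v - dot3 u w.
Proof. by rewrite dot3C dot3Bl !(dot3C u). Qed.

Lemma dot3Zl a u v : dot3 (a *: u) v = a * dot3 u v.
Proof. by rewrite /dot3 mulr_sumr; apply: eq_bigr => i _; rewrite mxE mulrA. Qed.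

Lemma dot3_ge0 v : 0 <= dot3 v v.
Proof. by apply: sumr_ge0 => i _; rewrite -expr2 sqr_ge0. Qed.

Lemma enorm3_ge0 v : 0 <= enorm3 v.
Proof. exact: sqrtr_ge0. Qed.

Lemma sqr_enorm3 v : enorm3 v ^+ 2 = dot3 v v.
Proof. by rewrite sqr_sqrtr // dot3_ge0. Qed.

(* Lagrange's identity: the defect in Cauchy-Schwarz is half a sum of squares. *)
Lemma sqr_dot3_le u v : dot3 u v ^+ 2 <= dot3 u u * dot3 v v.
Proof.
pose x (p : 'I_3 * 'I_3) := u ord0 p.1 * v ord0 p.2.
pose y (p : 'I_3 * 'I_3) := u ord0 p.2 * v ord0 p.1.
have sum_x2 : dot3 u u * dot3 v v = \sum_p x p ^+ 2.
  rewrite /dot3 big_distrlr pair_bigA; apply: eq_bigr => p _ /=; rewrite /x; ring.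
have sum_y2 : dot3 u u * dot3 v v = \sum_p y p ^+ 2.
  rewrite mulrC /dot3 big_distrlr pair_bigA; apply: eq_bigr => p _ /=; rewrite /y; ring.
have sum_xy : dot3 u v ^+ 2 = \sum_p x p * y p.
  rewrite expr2 /dot3 big_distrlr pair_bigA; apply: eq_bigr => p _ /=; rewrite /x /y; ring.
have : 0 <= \sum_p (x p - y p) ^+ 2 by apply: sumr_ge0 => p _; exact: sqr_ge0.
have -> : \sum_p (x p - y p) ^+ 2 = \sum_p x p ^+ 2 + \sum_p y p ^+ 2 - 2 * \sum_p x p * y p.
  rewrite mulr_sumr -big_split -sumrB; apply: eq_bigr => p _ /=; ring.
rewrite -sum_x2 -sum_y2 -sum_xy; lra.
Qed.

Lemma dot3_norm_le u v : `|dot3 u v| <= enorm3 u * enorm3 v.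
Proof.
by rewrite -sqrtrM ?dot3_ge0 // -sqrtr_sqr ler_sqrt ?mulr_ge0 ?dot3_ge0 ?sqr_dot3_le.
Qed.

Lemma enorm3B_le u v : enorm3 (u - v) <= enorm3 u + enorm3 v.
Proof.
rewrite -ler_sqr ?nnegrE ?addr_ge0 ?enorm3_ge0 // sqrrD !sqr_enorm3.
rewrite dot3Bl !dot3Br (dot3C v u).
have := dot3_norm_le u v; rewrite ler_norml => /andP[+ _]; lra.
Qed.

Lemma jmap_powR v : jmap v = powR (enorm3 v) (- 2^-1) *: v.
Proof. by rewrite /jmap; case: eqP => [->|]; rewrite ?scaler0. Qed.

Lemma jmapE v : jmap v = (Num.sqrt (enorm3 v))^-1 *: v.
Proof. by rewrite jmap_powR powRN powR12_sqrt ?enorm3_ge0. Qed.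

(* [sqr_enorm3B_le] below, written in [x = |u|^(1/2)], [y = |v|^(1/2)], [P = u . v];
   for [x, y > 0] the right side minus the left side is [(x^2 + y^2)(x^2 y^2 - P)/(x y)]. *)
Lemma sqr_enorm3B_le_scalar (x y P : R) : 0 <= x -> 0 <= y -> `|P| <= x ^+ 2 * y ^+ 2 ->
  x ^+ 4 + y ^+ 4 - 2 * P <= (x ^+ 4 / x + y ^+ 4 / y - P / x - P / y) * (x + y).
Proof.
move=> x0 y0 hP.
have pow4_divK (z : R) : z ^+ 4 / z * z = z ^+ 4.
  by have [->|z0] := eqVneq z 0; rewrite ?mulr0 ?expr0n ?divfK.
have P0 : x * y = 0 -> P = 0.
  by move=> xy0; apply/eqP; rewrite -normr_le0 (le_trans hP) // -exprMn xy0 expr2 mul0r.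
have [x_eq0|x_neq0] := eqVneq x 0.
  by rewrite P0 x_eq0 ?mul0r // expr0n /= !(mul0r, mulr0, add0r, subr0) pow4_divK.
have [y_eq0|y_neq0] := eqVneq y 0.
  by rewrite P0 y_eq0 ?mulr0 // expr0n /= !(mul0r, mulr0, addr0, subr0) pow4_divK.
have xy0 : 0 < x * y by rewrite mulr_gt0 // lt0r ?x_neq0 ?y_neq0.
rewrite -subr_ge0.
have -> : (x ^+ 4 / x + y ^+ 4 / y - P / x - P / y) * (x + y) - (x ^+ 4 + y ^+ 4 - 2 * P)
    = (x ^+ 2 + y ^+ 2) * (x ^+ 2 * y ^+ 2 - P) / (x * y) by field; rewrite x_neq0 y_neq0.
apply: divr_ge0; last exact: ltW.
apply: mulr_ge0; first by rewrite addr_ge0 ?sqr_ge0.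
by rewrite subr_ge0 (le_trans (ler_norm P)).
Qed.

Lemma sqr_enorm3B_le u v : enorm3 (u - v) ^+ 2 <=
  dot3 (jmap u - jmap v) (u - v) * (Num.sqrt (enorm3 u) + Num.sqrt (enorm3 v)).
Proof.
set x := Num.sqrt (enorm3 u); set y := Num.sqrt (enorm3 v).
have x2 : x ^+ 2 = enorm3 u by rewrite sqr_sqrtr ?enorm3_ge0.
have y2 : y ^+ 2 = enorm3 v by rewrite sqr_sqrtr ?enorm3_ge0.
have x4 : dot3 u u = x ^+ 4 by rewrite -sqr_enorm3 -x2 -exprM.
have y4 : dot3 v v = y ^+ 4 by rewrite -sqr_enorm3 -y2 -exprM.
have hP : `|dot3 u v| <= x ^+ 2 * y ^+ 2 by rewrite x2 y2 dot3_norm_le.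
have := @sqr_enorm3B_le_scalar _ _ _ (sqrtr_ge0 _) (sqrtr_ge0 _) hP.
rewrite sqr_enorm3 !jmapE !dot3Bl !dot3Br !dot3Zl (dot3C v u) -/x -/y x4 y4.
nra.
Qed.

End EuclideanSpace.

Section Interpolation.
Variable R : realType.

Lemma ler_powR2r (r x y : R) : 0 <= r -> 0 <= x -> x <= y -> powR x r <= powR y r.
Proof. by move=> r0 x0 xy; apply: ge0_ler_powR; rewrite ?nnegrE // (le_trans x0). Qed.

Lemma powR_le_large (p q eps : R) : 0 <= p -> p < q -> 0 < eps ->
  exists2 N : R, 0 < N & forall m, N <= m -> powR (2 * m) p <= eps * powR m q.
Proof.
move=> p0 pq eps0.
set K := powR 2 p / eps.
have K0 : 0 < K by rewrite divr_gt0 ?powR_gt0.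
have qp0 : 0 < q - p by rewrite subr_gt0.
exists (powR K (q - p)^-1) => [|m Nm]; first exact: powR_gt0.
have m0 : 0 < m := lt_le_trans (powR_gt0 _ K0) Nm.
have Km : K <= powR m (q - p).
  rewrite -[leLHS](powRr1 (ltW K0)) -(mulVf (lt0r_neq0 qp0)) powRrM.
  exact: ler_powR2r (ltW qp0) (powR_ge0 _ _) Nm.
rewrite powRM ?(ltW m0) // -[q](subrK p) powRD ?(gt_eqF m0) ?implybT // mulrA.
apply: ler_wpM2r; first exact: powR_ge0.
apply: le_trans (ler_wpM2l (ltW eps0) Km).
by rewrite /K mulrCA mulfV ?mulr1 // lt0r_neq0.
Qed.

Lemma powR_le_interpolation (p q th eps : R) : 0 < p -> p < q -> 0 < th -> 0 < eps ->
  exists2 C : R, 0 <= C & forall u a b g : R, 0 <= u -> 0 <= a -> 0 <= b -> u <= a + b ->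
    u ^+ 2 <= g * (Num.sqrt a + Num.sqrt b) ->
    powR u p <= eps * (1 + powR a q + powR b q) + C * powR g th.
Proof.
move=> p0 pq th0 eps0.
have [N N0 hN] := powR_le_large (ltW p0) pq eps0.
set d := powR eps p^-1.
have d0 : 0 < d by exact: powR_gt0.
have dp : powR d p = eps by rewrite /d -powRrM mulVf ?gt_eqF // powRr1 // ltW.
have sN0 : 0 < Num.sqrt N by rewrite sqrtr_gt0.
set gam := d ^+ 2 / (2 * Num.sqrt N).
have gam0 : 0 < gam by rewrite divr_gt0 ?exprn_gt0 ?mulr_gt0.
set C := powR (2 * N) p / powR gam th.
exists C => [|u a b g u0 a0 b0 uab ug]; first by rewrite divr_ge0 ?powR_ge0.
have [m [am bm mq]] : exists m, [/\ a <= m, b <= m & powR m q <= powR a q + powR b q].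
  have [ab|/ltW ba] := leP a b.
    by exists b; rewrite ab lexx lerDr powR_ge0.
  by exists a; rewrite ba lexx lerDl powR_ge0.
have u2m : powR u p <= powR (2 * m) p by apply: ler_powR2r (ltW p0) u0 _; lra.
have epsA : 0 <= eps * powR a q by rewrite mulr_ge0 ?powR_ge0 ?ltW.
have epsB : 0 <= eps * powR b q by rewrite mulr_ge0 ?powR_ge0 ?ltW.
have CG : 0 <= C * powR g th by rewrite mulr_ge0 ?divr_ge0 ?powR_ge0.
rewrite !mulrDr mulr1.
have [ud|du] := leP u d.
  have : powR u p <= eps by rewrite -dp; apply: ler_powR2r (ltW p0) u0 ud.
  lra.
have [Nm|mN] := leP N m.
  have := hN m Nm.
  have := ler_wpM2l (ltW eps0) mq.
  lra.
have su : Num.sqrt a + Num.sqrt b <= 2 * Num.sqrt N.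
  by rewrite mulr_natl mulr2n lerD // ler_sqrt ?ltW // (le_lt_trans _ mN).
have d2u2 : d ^+ 2 < u ^+ 2 by nra.
have g0 : 0 < g by have := sqrtr_ge0 a; have := sqrtr_ge0 b; nra.
have gam_g : gam <= g.
  rewrite ler_pdivrMr ?mulr_gt0 //.
  exact: le_trans (ltW d2u2) (le_trans ug (ler_wpM2l (ltW g0) su)).
have : powR u p <= C * powR g th.
  apply: (le_trans u2m); apply: (@le_trans _ _ (powR (2 * N) p)).
    apply: ler_powR2r (ltW p0) _ _; lra.
  rewrite -{1}(divfK (lt0r_neq0 (powR_gt0 th gam0)) (powR (2 * N) p)) -/C.
  by apply: ler_wpM2l; rewrite ?divr_ge0 ?powR_ge0 // ler_powR2r ?(ltW th0) ?(ltW gam0).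
lra.
Qed.

End Interpolation.

Section Measurability.
Context (d : measure_display) (T : measurableType d) (R : realType) (E : set T).
Implicit Types G H : T -> 'rV[R]_3.

Lemma meas3B G H : meas3 E G -> meas3 E H -> meas3 E (fun x => G x - H x).
Proof.
move=> mG mH i; apply: (eq_measurable_fun (fun x => G x ord0 i - H x ord0 i)).
  by move=> x _; rewrite !mxE.
exact: measurable_funB.
Qed.

Lemma measurable_dot3 G H : meas3 E G -> meas3 E H ->
  measurable_fun E (fun x => dot3 (G x) (H x)).
Proof. by move=> mG mH; apply: measurable_sum => i; exact: measurable_funM. Qed.

Lemma measurable_enorm3 G : meas3 E G -> measurable_fun E (fun x => enorm3 (G x)).
Proof.
move=> mG; apply: (measurableT_comp _ (measurable_dot3 mG mG)).
exact: continuous_measurable_fun (@sqrt_continuous R).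
Qed.

Lemma measurable_powR_enorm3 G r : meas3 E G ->
  measurable_fun E (fun x => powR (enorm3 (G x)) r).
Proof.
by move=> mG; apply: measurableT_comp (measurable_powR r) (measurable_enorm3 mG).
Qed.

Lemma meas3_jmap G : meas3 E G -> meas3 E (fun x => jmap (G x)).
Proof.
move=> mG i; apply: (eq_measurable_fun
  (fun x => powR (enorm3 (G x)) (- 2^-1) * G x ord0 i)).
  by move=> x _; rewrite jmap_powR mxE.
exact: measurable_funM (measurable_powR_enorm3 _ mG) (mG i).
Qed.

Lemma measurable_powR_dot3_jmapB G H r : meas3 E G -> meas3 E H ->
  measurable_fun E (fun x => powR (dot3 (jmap (G x) - jmap (H x)) (G x - H x)) r).
Proof.
move=> mG mH; apply: (measurableT_comp (measurable_powR r)).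
exact: measurable_dot3 (meas3B (meas3_jmap mG) (meas3_jmap mH)) (meas3B mG mH).
Qed.

End Measurability.

Section IntegralOfLinearCombination.
Context (d : measure_display) (T : measurableType d) (R : realType).
Variables (mu : {measure set T -> \bar R}) (E : set T).
Hypothesis mE : measurable E.
Local Open Scope ereal_scope.

Lemma ge0_integralD_EFin (f g : T -> R) :
  (forall x, E x -> 0 <= f x)%R -> measurable_fun E f ->
  (forall x, E x -> 0 <= g x)%R -> measurable_fun E g ->
  \int[mu]_(x in E) (f x + g x)%:E = \int[mu]_(x in E) (f x)%:E + \int[mu]_(x in E) (g x)%:E.
Proof.
move=> f0 mf g0 mg; under eq_integral do rewrite EFinD.
by apply: ge0_integralD => //; exact/measurable_EFinP.
Qed.

Lemma ge0_integralMl_EFin (k : R) (f : T -> R) : (0 <= k)%R ->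
  (forall x, E x -> 0 <= f x)%R -> measurable_fun E f ->
  \int[mu]_(x in E) (k * f x)%:E = k%:E * \int[mu]_(x in E) (f x)%:E.
Proof.
move=> k0 f0 mf; under eq_integral do rewrite EFinM.
by apply: ge0_integralZl_EFin => //; exact/measurable_EFinP.
Qed.

Lemma integral_le_lincomb (u f g h : T -> R) (eps C : R) : (0 <= eps)%R -> (0 <= C)%R ->
  (forall x, E x -> 0 <= f x)%R -> measurable_fun E f ->
  (forall x, E x -> 0 <= g x)%R -> measurable_fun E g ->
  (forall x, E x -> 0 <= h x)%R -> measurable_fun E h ->
  (forall x, E x -> 0 <= u x <= eps * (1 + f x + g x) + C * h x)%R -> measurable_fun E u ->
  \int[mu]_(x in E) (u x)%:E <= eps%:E * (mu E + \int[mu]_(x in E) (f x)%:E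
    + \int[mu]_(x in E) (g x)%:E) + C%:E * \int[mu]_(x in E) (h x)%:E.
Proof.
move=> eps0 C0 f0 mf g0 mg h0 mh hu mu_.
have f10 x : E x -> (0 <= 1 + f x)%R by move=> Ex; rewrite addr_ge0 ?f0.
have f1g0 x : E x -> (0 <= 1 + f x + g x)%R by move=> Ex; rewrite addr_ge0 ?f10 ?g0.
have mf1 : measurable_fun E (fun x => 1 + f x)%R by exact: measurable_funD.
have mf1g : measurable_fun E (fun x => 1 + f x + g x)%R by exact: measurable_funD.
have c10 x : E x -> (0 <= eps * (1 + f x + g x))%R by move=> Ex; rewrite mulr_ge0 ?f1g0.
have c20 x : E x -> (0 <= C * h x)%R by move=> Ex; rewrite mulr_ge0 ?h0.
have mc1 : measurable_fun E (fun x => eps * (1 + f x + g x))%R by exact: measurable_funM.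
have mc2 : measurable_fun E (fun x => C * h x)%R by exact: measurable_funM.
have -> : eps%:E * (mu E + \int[mu]_(x in E) (f x)%:E + \int[mu]_(x in E) (g x)%:E)
    + C%:E * \int[mu]_(x in E) (h x)%:E
    = \int[mu]_(x in E) (eps * (1 + f x + g x) + C * h x)%:E.
  rewrite ge0_integralD_EFin // !ge0_integralMl_EFin // !ge0_integralD_EFin //.
  by rewrite integral_cst // mul1e.
apply: ge0_le_integral => //.
- by move=> x /hu /andP[].
- exact/measurable_EFinP.
- by apply/measurable_EFinP; exact: measurable_funD.
- by move=> x /hu /andP[_]; rewrite lee_fin.
Qed.

End IntegralOfLinearCombination.

Section KeyEstimate.
Context (d : measure_display) (T : measurableType d) (R : realType).
Variables (mu : {measure set T -> \bar R}) (E : set T).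
Hypothesis mE : measurable E.

Lemma intp_ge0 r (G : T -> 'rV[R]_3) : (0 <= intp mu E r G)%E.
Proof. by apply: integral_ge0 => x _; rewrite lee_fin powR_ge0. Qed.

Lemma intpB_le (p q th eps : R) : 0 < p -> p < q -> 0 < th -> 0 < eps ->
  exists C : R, forall G H : T -> 'rV[R]_3, meas3 E G -> meas3 E H ->
    (intp mu E p (fun x => (G x - H x)%R) <= eps%:E * (mu E + intp mu E q G + intp mu E q H)
      + C%:E * \int[mu]_(x in E) (powR (dot3 (jmap (G x) - jmap (H x)) (G x - H x)) th)%R%:E)%E.
Proof.
move=> p0 pq th0 eps0; have [C C0 hC] := powR_le_interpolation p0 pq th0 eps0.
exists C => G H mG mH; apply: integral_le_lincomb => //; try by move=> x _; exact: powR_ge0.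
- exact: ltW.
- exact: measurable_powR_enorm3.
- exact: measurable_powR_enorm3.
- exact: measurable_powR_dot3_jmapB.
- move=> x _; rewrite powR_ge0 /=; apply: hC; rewrite ?enorm3_ge0 //.
    exact: enorm3B_le.
  exact: sqr_enorm3B_le.
- exact: measurable_powR_enorm3 (meas3B mG mH).
Qed.

End KeyEstimate.

Section EpsilonArgument.
Context {I : Type} {F : set_system I} {FF : Filter F} {R : realFieldType}.
Local Open Scope ereal_scope.

Lemma ge0_cvge0 (a : I -> \bar R) : (forall i, 0 <= a i) ->
  (forall eps : R, (0 < eps)%R -> \forall i \near F, a i <= eps%:E) ->
  a i @[i --> F] --> 0.
Proof.
move=> a0 ha; apply/fine_cvgP; split.
  by apply: filterS (ha 1%R ltr01) => i ai; rewrite ge0_fin_numE // (le_lt_trans ai) ?ltry.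
apply/cvgr0Pnorm_le => eps eps0; apply: filterS (ha _ eps0) => i ai /=.
have ai_fin : a i \is a fin_num by rewrite ge0_fin_numE // (le_lt_trans ai) ?ltry.
by rewrite ger0_norm ?fine_ge0 // -lee_fin fineK.
Qed.

Lemma cvge0_le_eps_bound (a b q : I -> \bar R) :
  (forall i, 0 <= a i) -> (forall i, 0 <= b i) -> (exists K : R, forall i, b i <= K%:E) ->
  q i @[i --> F] --> 0 ->
  (forall eps : R, (0 < eps)%R -> exists C : R, forall i, a i <= eps%:E * b i + C%:E * q i) ->
  a i @[i --> F] --> 0.
Proof.
move=> a0 b0 [K bK] /fine_cvgP[q_fin q0] hC; apply: ge0_cvge0 => // eps eps0.
have eps20 : (0 < eps / 2)%R by rewrite divr_gt0.
have [C hCi] := hC (eps / 2 / (`|K| + 1))%R (divr_gt0 eps20 (ltr_pwDr ltr01 (normr_ge0 K))).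
have eta0 : (0 < eps / 2 / (`|C| + 1))%R by rewrite divr_gt0 // ltr_pwDr.
apply: filterS2 q_fin ((cvgr0Pnorm_le _).1 q0 _ eta0) => i qi /= qle.
apply: le_trans (hCi i) _.
rewrite (_ : eps%:E = (eps / 2)%:E + (eps / 2)%:E); last by rewrite -EFinD -splitr.
apply: leeD.
  apply: le_trans (lee_wpmul2l _ (bK i)) _; first by rewrite lee_fin ltW ?divr_gt0 ?ltr_pwDr.
  rewrite -EFinM lee_fin mulrAC ler_pdivrMr ?ltr_pwDr //.
  by have := ler_norm K; nra.
rewrite -(fineK qi) -EFinM lee_fin; apply: le_trans (ler_norm _) _; rewrite normrM.
apply: le_trans (ler_wpM2l (normr_ge0 C) qle) _.
by rewrite mulrA ler_pdivrMr ?ltr_pwDr //; nra.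
Qed.

End EpsilonArgument.

Theorem lemma8p2 (d : measure_display) (T : measurableType d) (R : realType)
  (mu : {measure set T -> \bar R}) (E : set T)
  (Fn : nat -> T -> 'rV[R]_3) (F : T -> 'rV[R]_3) (theta : R) :
  measurable E -> (mu E < +oo)%E ->
  (forall n, inLp3 mu E (3 / 2) (Fn n)) ->
  (exists M : R, forall n, (intp mu E (3 / 2) (Fn n) <= M%:E)%E) ->
  inLp3 mu E (3 / 2) F ->
  0 < theta ->
  ((\int[mu]_(x in E)
      `| (powR (dot3 (jmap (Fn n x) - jmap (F x)) (Fn n x - F x)) theta)%:E |)%E)
    @[n --> \oo] --> 0%E ->
  forall p : R, 1 <= p < 3 / 2 ->
    (intp mu E p (fun x => Fn n x - F x)) @[n --> \oo] --> 0%E.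
Proof.
move=> mE muE hFn [M hM] hF th0 hQ p /andP[p1 p32].
set Q := fun n x => powR (dot3 (jmap (Fn n x) - jmap (F x)) (Fn n x - F x)) theta.
have absQ n : (\int[mu]_(x in E) `|(Q n x)%:E|)%E = (\int[mu]_(x in E) (Q n x)%:E)%E.
  by apply: eq_integral => x _; rewrite gee0_abs // lee_fin powR_ge0.
have [K hK] : exists K : R,
    forall n, (mu E + intp mu E (3 / 2) (Fn n) + intp mu E (3 / 2) F <= K%:E)%E.
  exists (fine (mu E) + M + fine (intp mu E (3 / 2) F)) => n.
  rewrite !EFinD !fineK ?ge0_fin_numE ?measure_ge0 ?intp_ge0 ?hF.2 //.
  by apply: leeD2r; apply: leeD2l.
apply: (cvge0_le_eps_bound
  (b := fun n => (mu E + intp mu E (3 / 2) (Fn n) + intp mu E (3 / 2) F)%E)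
  (q := fun n => (\int[mu]_(x in E) (Q n x)%:E)%E)).
- by move=> n; exact: intp_ge0.
- move=> n; apply: adde_ge0; last exact: intp_ge0.
  by apply: adde_ge0; [exact: measure_ge0 | exact: intp_ge0].
- by exists K.
- by rewrite -(eq_cvg _ _ absQ).
- move=> eps eps0; have [C hC] := intpB_le mu mE (lt_le_trans ltr01 p1) p32 th0 eps0.
  by exists C => n; exact: hC (hFn n).1 hF.1.
Qed.
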